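(* Every two-directional orthogonal ray graph $G$ with given bipartition $(U,V)$ and without twins has at least one normalized representation.
   Context: All graphs are finite and simple. $G$ is a bipartite graph with a fixed bipartition $(U,V)$; $N(x)$ denotes the open neighborhood of $x$. Standing assumption: $G$ has no twins, i.e. no two distinct vertices $x\neq y$ with $N(x)=N(y)$. A representation of $G$ is a pair $(<_x,<_y)$ of linear orders on $V(G)$ such that for all $u\in U$ and $v\in V$: $uv\in E(G)$ iff ($u<_x v$ and $u<_y v$). $G$ is a two-directional orthogonal ray graph if it has a representation. A representation $(<_x,<_y)$ is normalized if: (a) for all $u_1,u_2\in U$: ($u_1<_x u_2$ and $u_1<_y u_2$) iff $N(u_1)\supsetneq N(u_2)$; (b) for all $v_1,v_2\in V$: ($v_1<_x v_2$ and $v_1<_y v_2$) iff $N(v_1)\subsetneq N(v_2)$; (c) for all $u\in U$, $v\in V$: ($v<_x u$ and $v<_y u$) iff for every $v'\in N(u)$, $N(v)\subsetneq N(v')$. *)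

From mathcomp Require Import all_boot.
Set Implicit Arguments. Unset Strict Implicit. Unset Printing Implicit Defensive.

Definition simple_graph (T : finType) (e : rel T) : Prop :=
  symmetric e /\ irreflexive e.

Definition bipartition (T : finType) (e : rel T) (U : {set T}) : Prop :=
  forall x y, e x y -> (x \in U) = (y \notin U).

Definition nbh (T : finType) (e : rel T) (x : T) : {set T} := [set y | e x y].

Definition twin_free (T : finType) (e : rel T) : Prop :=
  forall x y, x != y -> nbh e x != nbh e y.

Definition strict_linear_order (T : finType) (r : rel T) : Prop :=
  irreflexive r /\ transitive r /\ (forall x y, x != y -> r x y || r y x).

Definition representation (T : finType) (e : rel T) (U : {set T})
    (lx ly : rel T) : Prop :=
  strict_linear_order lx /\ strict_linear_order ly /\
  forall u v, u \in U -> v \in ~: U -> e u v = lx u v && ly u v.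

Definition two_directional_orthogonal_ray_graph (T : finType) (e : rel T)
    (U : {set T}) : Prop :=
  exists lx ly, representation e U lx ly.

Definition normalized (T : finType) (e : rel T) (U : {set T})
    (lx ly : rel T) : Prop :=
  representation e U lx ly /\
  (forall u1 u2, u1 \in U -> u2 \in U ->
     (lx u1 u2 && ly u1 u2) = (nbh e u2 \proper nbh e u1)) /\
  (forall v1 v2, v1 \in ~: U -> v2 \in ~: U ->
     (lx v1 v2 && ly v1 v2) = (nbh e v1 \proper nbh e v2)) /\
  (forall u v, u \in U -> v \in ~: U ->
     (lx v u && ly v u) <-> (forall v', v' \in nbh e u -> nbh e v \proper nbh e v')).

From mathcomp Require Import all_boot.
Set Implicit Arguments. Unset Strict Implicit. Unset Printing Implicit Defensive.

(* Conditions (a)-(c) prescribe exactly which pairs must lie in the common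
   part of the two orders; call this strict partial order P.  In any
   representation (O, Q), lying below in both orders already forces P.
   Linearly extend P along O (P decides first, O breaks the remaining ties)
   and likewise along Q: the common part of the two extensions is P, because
   the only pairs they could add are pairs below in both O and Q.  What makes
   the extension along O transitive is that P and O form no "triangle"
   P x y, O y z, O z x with z P-incomparable to both x and y; this last fact
   is where the geometry of the representation enters. *)

Section LinearExtension.
Variables (T : finType) (P O : rel T).

Definition lin_ext : rel T := fun a b => P a b || O a b && ~~ P b a.

Hypotheses (P_irr : irreflexive P) (P_trans : transitive P).
Hypothesis O_lin : strict_linear_order O.
Hypothesis P_O_triangle : forall x y z, P x y -> O y z -> O z x ->
  [|| P x z, P z x, P y z | P z y].

Let O_irr : irreflexive O := proj1 O_lin.
Let O_lt_trans x y z : O x y -> O y z -> O x z := proj1 (proj2 O_lin) y x z.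
Let O_total : forall x y, x != y -> O x y || O y x := proj2 (proj2 O_lin).

Lemma lin_ext_trans : transitive lin_ext.
Proof.
move=> b a c /orP[Pab | /andP[Oab nPba]] /orP[Pbc | /andP[Obc nPcb]];
  rewrite /lin_ext; case Pac: (P a c) => //=.
- by rewrite (P_trans Pab Pbc) in Pac.
- have nPca : P c a = false.
    by apply: contraNF nPcb => Pca; apply: P_trans Pca Pab.
  have nPbc : P b c = false by apply: contraFF Pac; apply: P_trans Pab.
  rewrite nPca andbT; have nac : a != c by apply: contraNneq nPcb => <-.
  case/orP: (O_total nac) => // Oca.
  by have := P_O_triangle Pab Obc Oca; rewrite Pac nPca nPbc (negbTE nPcb).
- have nPca : P c a = false.
    by apply: contraNF nPba => Pca; apply: P_trans Pbc Pca.
  have nPab : P a b = false by apply: contraFF Pac => Pab; apply: P_trans Pab Pbc.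
  rewrite nPca andbT; have nac : a != c by apply: contraNneq nPba => ->.
  case/orP: (O_total nac) => // Oca.
  by have := P_O_triangle Pbc Oca Oab; rewrite Pac nPca nPab (negbTE nPba).
- rewrite (O_lt_trans Oab Obc) /=; apply/negP => Pca.
  have nPbc : P b c = false.
    by apply: contraNF nPba => Pbc; apply: P_trans Pbc Pca.
  have nPab : P a b = false.
    by apply: contraNF nPcb => Pab; apply: P_trans Pca Pab.
  by have := P_O_triangle Pca Oab Obc; rewrite nPbc nPab (negbTE nPba) (negbTE nPcb).
Qed.

Lemma lin_ext_strict_linear_order : strict_linear_order lin_ext.
Proof.
split; [by move=> a; rewrite /lin_ext P_irr O_irr | split; first exact: lin_ext_trans].
move=> x y nxy; rewrite /lin_ext.
case: (P x y) => //=; case: (P y x); first by rewrite orbT.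
by rewrite !andbT O_total.
Qed.

End LinearExtension.

Lemma lin_ext_meet (T : finType) (P O Q : rel T) :
  (forall a b, O a b -> Q a b -> P a b) ->
  forall a b, lin_ext P O a b && lin_ext P Q a b = P a b.
Proof.
move=> OQ_P a b; rewrite /lin_ext; case Pab: (P a b) => //=.
by apply: contraFF Pab => /andP[/andP[Oab _] /andP[Qab _]]; apply: OQ_P.
Qed.

(* [norm_rel e U a b] holds iff a precedes b in both orders of a normalized
   representation. *)
Definition norm_rel (T : finType) (e : rel T) (U : {set T}) : rel T := fun a b =>
  if a \in U then (if b \in U then nbh e b \proper nbh e a else e a b)
  else (if b \in U then [forall v in nbh e b, nbh e a \proper nbh e v]
        else nbh e a \proper nbh e b).

Lemma normalized_of_meet (T : finType) (e : rel T) (U : {set T}) (lx ly : rel T) :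
  strict_linear_order lx -> strict_linear_order ly ->
  (forall a b, lx a b && ly a b = norm_rel e U a b) -> normalized e U lx ly.
Proof.
move=> lx_lin ly_lin meet.
split; [split; [by [] | split; [by [] |]] | split; [| split]].
- by move=> u v Hu; rewrite inE => Hv; rewrite meet /norm_rel Hu (negbTE Hv).
- by move=> u1 u2 H1 H2; rewrite meet /norm_rel H1 H2.
- by move=> v1 v2; rewrite !inE => H1 H2; rewrite meet /norm_rel !ifN.
- move=> u v Hu; rewrite inE => Hv; rewrite meet /norm_rel Hu (negbTE Hv).
  by split => /forall_inP.
Qed.

Lemma in_nbh (T : finType) (e : rel T) x y : (y \in nbh e x) = e x y.
Proof. by rewrite inE. Qed.

Lemma nbh_proper_sub (T : finType) (e : rel T) a b w :
  nbh e a \proper nbh e b -> e a w -> e b w.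
Proof. by move=> /properP[/subsetP sab _]; rewrite -!in_nbh; apply: sab. Qed.

Lemma norm_rel_irr (T : finType) (e : rel T) U : irreflexive (norm_rel e U).
Proof. by move=> a; rewrite /norm_rel; case: (a \in U); rewrite properxx. Qed.

Lemma norm_rel_trans (T : finType) (e : rel T) U :
  symmetric e -> transitive (norm_rel e U).
Proof.
move=> e_sym b a c; rewrite /norm_rel.
case: (a \in U); case: (b \in U); case: (c \in U) => /=.
- by move=> Nba Ncb; apply: proper_trans Ncb Nba.
- by move=> Nba; apply: nbh_proper_sub.
- move=> eab /forall_inP Nbc; apply/properP; split.
    apply/subsetP => v; rewrite !in_nbh => ecv.
    by rewrite e_sym; apply: nbh_proper_sub (Nbc v _) _; rewrite ?in_nbh // e_sym.
  exists b; first by rewrite in_nbh.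
  by apply/negP => /Nbc; rewrite properxx.
- move=> eab Nbc; rewrite e_sym; apply: nbh_proper_sub Nbc _.
  by rewrite e_sym.
- move=> /forall_inP Nab /properP[/subsetP scb _]; apply/forall_inP => v cv.
  exact/Nab/scb.
- by move=> /forall_inP Nab ebc; apply: Nab; rewrite in_nbh.
- move=> Nab /forall_inP Nbc; apply/forall_inP => v cv.
  exact: proper_trans Nab (Nbc v cv).
- by move=> Nab Nbc; apply: proper_trans Nab Nbc.
Qed.

Section NormRel.
Variables (T : finType) (e : rel T) (U : {set T}) (O Q : rel T).
Hypotheses (e_sym : symmetric e) (e_bip : bipartition e U) (e_tf : twin_free e).
Hypotheses (O_lin : strict_linear_order O) (Q_lin : strict_linear_order Q).
Hypothesis e_rep : forall u v, u \in U -> v \notin U -> e u v = O u v && Q u v.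

Local Notation P := (norm_rel e U).

Let O_irr : irreflexive O := proj1 O_lin.
Let O_lt_trans x y z : O x y -> O y z -> O x z := proj1 (proj2 O_lin) y x z.
Let O_total : forall x y, x != y -> O x y || O y x := proj2 (proj2 O_lin).
Let Q_irr : irreflexive Q := proj1 Q_lin.
Let Q_lt_trans x y z : Q x y -> Q y z -> Q x z := proj1 (proj2 Q_lin) y x z.
Let Q_total : forall x y, x != y -> Q x y || Q y x := proj2 (proj2 Q_lin).

Lemma edge_out x y : e x y -> x \in U -> y \notin U.
Proof. by move=> exy Hx; rewrite -(e_bip exy). Qed.

Lemma edge_in x y : e x y -> x \notin U -> y \in U.
Proof. by move=> exy; rewrite (e_bip exy) negbK. Qed.

Lemma edge_lt u v : u \in U -> e u v -> O u v /\ Q u v.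
Proof. by move=> Hu euv; apply/andP; rewrite -e_rep // (edge_out euv Hu). Qed.

Lemma edge_lt' u v : u \in U -> e v u -> O u v /\ Q u v.
Proof. by rewrite e_sym; apply: edge_lt. Qed.

Lemma lt_edge u v : u \in U -> v \notin U -> O u v -> Q u v -> e u v.
Proof. by move=> Hu Hv Ouv Quv; rewrite e_rep // Ouv Quv. Qed.

Lemma lt_edge' u v : u \in U -> v \notin U -> O u v -> Q u v -> e v u.
Proof. by rewrite e_sym; apply: lt_edge. Qed.

Lemma sub_nbh_proper a b :
  nbh e a \subset nbh e b -> a != b -> nbh e a \proper nbh e b.
Proof. by move=> sab nab; rewrite properEneq sab andbT e_tf. Qed.

Lemma nbh_proper a b :
  (forall w, e a w -> e b w) -> a != b -> nbh e a \proper nbh e b.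
Proof.
move=> sab; apply: sub_nbh_proper; apply/subsetP => w; rewrite !in_nbh.
exact: sab.
Qed.

Lemma lt_norm_rel a b : O a b -> Q a b -> P a b.
Proof.
move=> Oab Qab; have nab : a != b by apply: contraTneq Oab => ->; rewrite O_irr.
rewrite /norm_rel; case: ifPn => Ha; case: ifPn => Hb.
- apply: nbh_proper; last by rewrite eq_sym.
  move=> v /[dup] ebv /(edge_lt Hb)[Obv Qbv].
  exact: lt_edge Ha (edge_out ebv Hb) (O_lt_trans Oab Obv) (Q_lt_trans Qab Qbv).
- exact: lt_edge.
- apply/forall_inP => v; rewrite in_nbh => /[dup] ebv /(edge_lt Hb)[Obv Qbv].
  have Hv := edge_out ebv Hb.
  apply: nbh_proper => [u /[dup] eau /(edge_lt' (edge_in eau Ha))[Oua Qua] |].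
    exact: lt_edge' (edge_in eau Ha) Hv
      (O_lt_trans Oua (O_lt_trans Oab Obv)) (Q_lt_trans Qua (Q_lt_trans Qab Qbv)).
  by apply: contraTneq (O_lt_trans Oab Obv) => ->; rewrite O_irr.
- apply: nbh_proper => // u /[dup] eau /(edge_lt' (edge_in eau Ha))[Oua Qua].
  exact: lt_edge' (edge_in eau Ha) Hb (O_lt_trans Oua Oab) (Q_lt_trans Qua Qab).
Qed.

Lemma norm_rel_triangleU x y z : x \in U -> y \in U ->
  P x y -> O y z -> O z x -> Q z y -> P z y.
Proof.
move=> Hx Hy; rewrite /norm_rel Hx Hy => Nyx Oyz Ozx Qzy.
have zlt v : e y v -> [/\ v \notin U, O z v & Q z v].
  move=> eyv; have [Oxv _] := edge_lt Hx (nbh_proper_sub Nyx eyv).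
  have [_ Qyv] := edge_lt Hy eyv.
  by split; [apply: edge_out eyv Hy | apply: O_lt_trans Ozx Oxv
            | apply: Q_lt_trans Qzy Qyv].
case: ifPn => Hz.
- apply: nbh_proper => [v /zlt[Hv Ozv Qzv] |]; first exact: lt_edge.
  by apply: contraTneq Oyz => ->; rewrite O_irr.
- apply/forall_inP => v; rewrite in_nbh => /zlt[Hv Ozv Qzv].
  apply: nbh_proper => [u ezu |].
    have Hu := edge_in ezu Hz; have [Ouz Quz] := edge_lt' Hu ezu.
    exact: lt_edge' Hu Hv (O_lt_trans Ouz Ozv) (Q_lt_trans Quz Qzv).
  by apply: contraTneq Qzv => ->; rewrite Q_irr.
Qed.

Lemma norm_rel_triangleV x y z : x \notin U -> y \notin U ->
  P x y -> O y z -> Q x z -> P x z.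
Proof.
move=> Hx Hy; rewrite /norm_rel (negbTE Hx) (negbTE Hy) => Nxy Oyz Qxz.
have xlt u : e x u -> [/\ u \in U, O u z & Q u z].
  move=> exu; have Hu := edge_in exu Hx.
  have [Ouy _] := edge_lt' Hu (nbh_proper_sub Nxy exu).
  have [_ Qux] := edge_lt' Hu exu.
  by split; [| apply: O_lt_trans Ouy Oyz | apply: Q_lt_trans Qux Qxz].
case: ifPn => Hz.
- apply/forall_inP => v; rewrite in_nbh => ezv.
  have [Ozv Qzv] := edge_lt Hz ezv.
  apply: nbh_proper => [u /xlt[Hu Ouz Quz] |].
    exact: lt_edge' Hu (edge_out ezv Hz) (O_lt_trans Ouz Ozv) (Q_lt_trans Quz Qzv).
  by apply: contraTneq (Q_lt_trans Qxz Qzv) => ->; rewrite Q_irr.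
- apply: nbh_proper => [u /xlt[Hu Ouz Quz] |]; first exact: lt_edge'.
  by apply: contraTneq Qxz => ->; rewrite Q_irr.
Qed.

Lemma norm_rel_triangleVU x y z : x \notin U -> y \in U ->
  P x y -> O y z -> Q x z -> Q z y -> P x z || P z y.
Proof.
move=> Hx Hy; rewrite /norm_rel (negbTE Hx) Hy => /forall_inP Nxy Oyz Qxz Qzy.
have nbh_yx v u : e y v -> e x u -> e v u.
  by move=> eyv; apply: nbh_proper_sub (Nxy v _); rewrite in_nbh.
case: (boolP (z \in U)) => Hz /=.
- have [syz | /subsetPn[v0]] := boolP (nbh e y \subset nbh e z).
    by rewrite orbC sub_nbh_proper //; apply: contraTneq Oyz => ->; rewrite O_irr.
  rewrite !in_nbh => eyv0 nezv0; have Hv0 := edge_out eyv0 Hy.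
  have [_ Qyv0] := edge_lt Hy eyv0.
  have Ov0z : O v0 z.
    have : z != v0 by apply: contraTneq Hz => ->.
    case/O_total/orP => [Ozv0 | //].
    by move: nezv0; rewrite (lt_edge Hz Hv0 Ozv0 (Q_lt_trans Qzy Qyv0)).
  apply/orP; left; apply/forall_inP => v; rewrite in_nbh => ezv.
  have Hv := edge_out ezv Hz; have [Ozv Qzv] := edge_lt Hz ezv.
  apply: nbh_proper => [u exu |].
    have Hu := edge_in exu Hx; have [_ Qux] := edge_lt' Hu exu.
    have [Ouv0 _] := edge_lt' Hu (nbh_yx v0 u eyv0 exu).
    exact: lt_edge' Hu Hv (O_lt_trans Ouv0 (O_lt_trans Ov0z Ozv))
                          (Q_lt_trans Qux (Q_lt_trans Qxz Qzv)).
  by apply: contraTneq (Q_lt_trans Qxz Qzv) => ->; rewrite Q_irr.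
- have [sxz | /subsetPn[u0]] := boolP (nbh e x \subset nbh e z).
    by rewrite sub_nbh_proper //; apply: contraTneq Qxz => ->; rewrite Q_irr.
  rewrite !in_nbh => exu0 nezu0; have Hu0 := edge_in exu0 Hx.
  have [_ Qu0x] := edge_lt' Hu0 exu0.
  have Ozu0 : O z u0.
    have : u0 != z by apply: contraTneq Hu0 => ->.
    case/O_total/orP => [Ou0z | //].
    by move: nezu0; rewrite (lt_edge' Hu0 Hz Ou0z (Q_lt_trans Qu0x Qxz)).
  apply/orP; right; apply/forall_inP => v; rewrite in_nbh => eyv.
  have Hv := edge_out eyv Hy; have [_ Qyv] := edge_lt Hy eyv.
  have [Ou0v _] := edge_lt' Hu0 (nbh_yx v u0 eyv exu0).
  apply: nbh_proper => [u ezu |].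
    have Hu := edge_in ezu Hz; have [Ouz Quz] := edge_lt' Hu ezu.
    exact: lt_edge' Hu Hv (O_lt_trans Ouz (O_lt_trans Ozu0 Ou0v))
                          (Q_lt_trans Quz (Q_lt_trans Qzy Qyv)).
  by apply: contraTneq (Q_lt_trans Qzy Qyv) => ->; rewrite Q_irr.
Qed.

Lemma norm_rel_triangle x y z : P x y -> O y z -> O z x ->
  [|| P x z, P z x, P y z | P z y].
Proof.
move=> Pxy Oyz Ozx.
have nxz : x != z by apply: contraTneq Ozx => ->; rewrite O_irr.
have nzy : z != y by apply: contraTneq Oyz => ->; rewrite O_irr.
case/orP: (Q_total nxz) => [Qxz | Qzx]; last by rewrite (lt_norm_rel Ozx Qzx) orbT.
case/orP: (Q_total nzy) => [Qzy | Qyz]; last by rewrite (lt_norm_rel Oyz Qyz) !orbT.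
case: (boolP (x \in U)) => Hx; case: (boolP (y \in U)) => Hy.
- by rewrite (norm_rel_triangleU Hx Hy Pxy Oyz Ozx Qzy) !orbT.
- move: Pxy; rewrite /norm_rel Hx (negbTE Hy) => /(edge_lt Hx)[Oxy _].
  by have := O_lt_trans Oxy (O_lt_trans Oyz Ozx); rewrite O_irr.
- by case/orP: (norm_rel_triangleVU Hx Hy Pxy Oyz Qxz Qzy) => ->; rewrite ?orbT.
- by rewrite (norm_rel_triangleV Hx Hy Pxy Oyz Qxz).
Qed.

Lemma lin_ext_norm_rel_strict_linear_order : strict_linear_order (lin_ext P O).
Proof.
apply: lin_ext_strict_linear_order => //.
- exact: norm_rel_irr.
- exact: norm_rel_trans.
- exact: norm_rel_triangle.
Qed.

End NormRel.

Theorem mainTheorem2 (T : finType) (e : rel T) (U : {set T}) :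
  simple_graph e -> bipartition e U -> twin_free e ->
  two_directional_orthogonal_ray_graph e U ->
  exists lx ly : rel T, normalized e U lx ly.
Proof.
move=> [e_sym _] e_bip e_tf [lx [ly [lx_lin [ly_lin rep]]]].
have rep_xy u v : u \in U -> v \notin U -> e u v = lx u v && ly u v.
  by move=> Hu Hv; apply: rep; rewrite ?inE.
have rep_yx u v : u \in U -> v \notin U -> e u v = ly u v && lx u v.
  by move=> Hu Hv; rewrite andbC; apply: rep_xy.
exists (lin_ext (norm_rel e U) lx), (lin_ext (norm_rel e U) ly).
apply: normalized_of_meet.
- exact: lin_ext_norm_rel_strict_linear_order rep_xy.
- exact: lin_ext_norm_rel_strict_linear_order rep_yx.
- exact/lin_ext_meet/(lt_norm_rel e_sym e_bip e_tf lx_lin ly_lin rep_xy).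
Qed.
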